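(* Let $k$ be a field, $\Gamma=(V,E)$ a finite connected quiver, $I\subseteq R^2$ a two-sided ideal of $k\Gamma$, and let $q$ be a path with $h(q)=t(q)=v_0$. Then $$D_{\overline{q}}=\sum_{p\in E,\ t(p)=v_0}D_{p,\overline{qp}}-\sum_{r\in E,\ h(r)=v_0}D_{r,\overline{rq}}.$$
   Context: For a path $p$, $t(p),h(p)$ are its start and end vertex; paths multiply by left-to-right concatenation (product $0$ if they do not concatenate). $R$ is the ideal generated by $E$ and $\overline{x}=x+I$. A differential operator from $k\Gamma$ to $k\Gamma/I$ is a $k$-linear map $D$ with $D(xy)=D(x)\overline{y}+\overline{x}D(y)$. For $m\in k\Gamma/I$, $D_m$ denotes the differential operator $x\mapsto m\overline{x}-\overline{x}m$. For an arrow $r$ and a path $s$ with the same start and end vertices as $r$, $D_{r,\overline{s}}$ is the unique differential operator $k\Gamma\to k\Gamma/I$ with $D_{r,\overline{s}}(r)=\overline{s}$ and vanishing on all other arrows and all vertices. *)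

From HB Require Import structures.
From mathcomp Require Import all_boot all_order all_algebra.
From mathcomp Require Import finmap.
From mathcomp.multinomials Require Import monalg.
Set Implicit Arguments. Unset Strict Implicit. Unset Printing Implicit Defensive.
Import GRing.Theory.
Local Open Scope ring_scope.

Section Quiver.
Variables (V E : finType) (t h : E -> V).

Definition quiver_adj : rel V :=
  fun u w => [exists e : E, ((t e == u) && (h e == w)) || ((t e == w) && (h e == u))].
Definition quiver_connected : Prop := forall u w : V, connect quiver_adj u w.

(** Raw paths: a start vertex and a sequence of arrows, left-to-right.
    (v, [::]) is the trivial path e_v; (v, e1 :: ... :: en) is a path
    with t(e1) = v and h(e_i) = t(e_{i+1}). *)
Definition valid_path (x : V * seq E) : bool :=
  match x.2 with
  | [::] => true
  | e :: s => (t e == x.1) && path (fun a b => h a == t b) e s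
  end.

Definition qpath := {x : V * seq E | valid_path x}.

Definition tP (p : qpath) : V := (val p).1.
Definition hP (p : qpath) : V := last (val p).1 (map h (val p).2).

Definition vpath (v : V) : qpath := @exist _ valid_path (v, [::]) isT.
Lemma arr_valid (e : E) : valid_path (t e, [:: e]).
Proof. by rewrite /valid_path /= eqxx. Qed.
Definition apath (e : E) : qpath := exist _ (t e, [:: e]) (arr_valid e).

Definition pcat (p q : qpath) : option qpath :=
  if hP p == tP q then insub ((val p).1, (val p).2 ++ (val q).2) else None.

Variable k : fieldType.

Definition pathalg := {malg k[qpath]}.

Definition pel (p : qpath) : pathalg := << p >>.
Definition pel_opt (o : option qpath) : pathalg :=
  if o is Some r then << r >> else 0.

Definition pmul (x y : pathalg) : pathalg :=
  \sum_(p <- msupp x) \sum_(q <- msupp y) (x@_p * y@_q) *: pel_opt (pcat p q).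

Definition pone : pathalg := \sum_(v : V) pel (vpath v).

Definition is_ideal (I : pathalg -> Prop) : Prop :=
  [/\ I 0, (forall x y, I x -> I y -> I (x + y)),
      (forall a x, I x -> I (a *: x)),
      (forall x y, I y -> I (pmul x y)) & (forall x y, I x -> I (pmul x y))].

Definition ideal_gen (S : pathalg -> Prop) : pathalg -> Prop :=
  fun x => forall J, is_ideal J -> (forall s, S s -> J s) -> J x.

Definition arrow_ideal : pathalg -> Prop :=
  ideal_gen (fun x => exists e : E, x = pel (apath e)).
Definition arrow_ideal2 : pathalg -> Prop :=
  ideal_gen (fun x => exists a b, arrow_ideal a /\ arrow_ideal b /\ x = pmul a b).

Definition is_quotient (I : pathalg -> Prop) (A : algType k) (pi : pathalg -> A) : Prop :=
  [/\ (forall a x y, pi (a *: x + y) = a *: pi x + pi y),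
      (forall x y, pi (pmul x y) = pi x * pi y),
      pi pone = 1,
      (forall z : A, exists x, pi x = z) &
      (forall x, pi x = 0 <-> I x)].

Definition is_diffop (A : algType k) (pi : pathalg -> A) (D : pathalg -> A) : Prop :=
  (forall a x y, D (a *: x + y) = a *: D x + D y) /\
  (forall x y, D (pmul x y) = D x * pi y + pi x * D y).

Definition Dm (A : algType k) (pi : pathalg -> A) (m : A) : pathalg -> A :=
  fun x => m * pi x - pi x * m.

Definition is_Drs (A : algType k) (pi : pathalg -> A) (r : E) (s : pathalg)
    (D : pathalg -> A) : Prop :=
  [/\ is_diffop pi D, D (pel (apath r)) = pi s,
      (forall e, e != r -> D (pel (apath e)) = 0) &
      (forall v, D (pel (vpath v)) = 0)].

End Quiver.

From HB Require Import structures.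
From mathcomp Require Import all_boot all_order all_algebra.
From mathcomp Require Import finmap.
From mathcomp.multinomials Require Import monalg.
Import GRing.Theory.
Local Open Scope ring_scope.
Set Implicit Arguments. Unset Strict Implicit.

(** Both sides are differential operators k Gamma -> k Gamma / I, and a
    differential operator is determined by its values on vertices and arrows,
    since these generate k Gamma.  On a vertex [v] both sides vanish: [q] is a
    cycle, so [q e_v = e_v q].  On an arrow [e] the left side is
    [q e - e q]; the first sum contributes [q e] (only [D_{e, qe}] survives,
    and [q e = 0] unless [t(e) = v0]) and the second sum contributes [e q]. *)

Section PathAlgebra.
Variables (V E : finType) (t h : E -> V) (k : fieldType).
Local Notation qpath := (qpath t h).
Local Notation pathalg := (pathalg t h k).

Lemma pcat_Some (a b c : qpath) : hP a = tP b ->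
  val c = ((val a).1, (val a).2 ++ (val b).2) -> pcat a b = Some c.
Proof.
move=> hab def_c; rewrite /pcat hab eqxx.
case: insubP => [u _ val_u | invalid]; first by congr Some; apply: val_inj; rewrite val_u def_c.
by move: (valP c); rewrite def_c => /(negP invalid).
Qed.

Lemma pcat_None (a b : qpath) : hP a != tP b -> pcat a b = None.
Proof. by move=> hab; rewrite /pcat (negbTE hab). Qed.

Lemma pcat_vpath_cycle (q : qpath) (v : V) : tP q = hP q ->
  pcat q (vpath t h v) = pcat (vpath t h v) q.
Proof.
move=> cycle_q; have [-> | neq_v] := eqVneq v (hP q).
  rewrite (@pcat_Some _ _ q) ?cats0 -?surjective_pairing //.
  by rewrite (@pcat_Some _ _ q) // /tP /= -cycle_q -surjective_pairing.
rewrite !pcat_None //; first by rewrite /hP /= cycle_q.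
by rewrite /tP /= eq_sym.
Qed.

Lemma msupp_pel (a : qpath) : msupp (pel k a) = [fset a]%fset.
Proof. by rewrite /pel msuppU oner_eq0. Qed.

Lemma pmul_pel (a b : qpath) : pmul (pel k a) (pel k b) = pel_opt k (pcat a b).
Proof.
rewrite /pmul; under eq_bigr do rewrite (msupp_pel b) big_seq_fset1.
rewrite (msupp_pel a) big_seq_fset1 !mcoeffUU mulr1 scale1r; reflexivity.
Qed.

Lemma malgUZ (c : k) (p : qpath) : << c *g p >> = c *: pel k p.
Proof.
apply/malgP => d; rewrite [RHS]mcoeffZ [LHS](mcoeffU p c d) /pel [X in _ * X](mcoeffU p 1 d).
rewrite mulr_natr; reflexivity.
Qed.

Lemma pel_ind (P : pathalg -> Prop) :
  (forall x y, P x -> P y -> P (pmul x y)) ->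
  (forall v, P (pel k (vpath t h v))) -> (forall e, P (pel k (apath t h e))) ->
  forall p : qpath, P (pel k p).
Proof.
move=> Pmul Pv Pe [[v s]] /=; elim: s v => [|e s IHs] v valid_es.
  by rewrite (_ : exist _ _ _ = vpath t h v) //; apply: val_inj.
have te : t e = v by move: valid_es => /andP[/eqP].
have valid_s : valid_path t h (h e, s).
  move: valid_es; rewrite /valid_path /=; case: s {IHs} => [|e' s'] //=.
  by case/andP=> _ /andP[/eqP -> ->]; rewrite eqxx.
pose tail : qpath := exist _ (h e, s) valid_s.
rewrite (_ : pel k _ = pmul (pel k (apath t h e)) (pel k tail)).
  by apply: Pmul; [exact: Pe | exact: IHs].
by rewrite pmul_pel (@pcat_Some _ _ (exist _ (v, e :: s) valid_es)) //= te.
Qed.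

Variable A : algType k.

Definition klinear (f : pathalg -> A) := forall a x y, f (a *: x + y) = a *: f x + f y.

Section Klinear.
Variables (f : pathalg -> A) (f_lin : klinear f).

Lemma klinear0 : f 0 = 0.
Proof.
have := f_lin 1 0 0; rewrite !scale1r addr0 => f00.
by apply: (addrI (f 0)); rewrite addr0 -f00.
Qed.

Lemma klinearD x y : f (x + y) = f x + f y.
Proof. by have := f_lin 1 x y; rewrite !scale1r. Qed.

Lemma klinearZ a x : f (a *: x) = a *: f x.
Proof. by have := f_lin a x 0; rewrite addr0 klinear0 addr0. Qed.

End Klinear.

Variable pi : pathalg -> A.

Lemma diffop_sub D1 D2 : is_diffop pi D1 -> is_diffop pi D2 ->
  is_diffop pi (fun x => D1 x - D2 x).
Proof.
move=> [lin1 leib1] [lin2 leib2]; split=> [a x y | x y].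
  by rewrite lin1 lin2 scalerBr opprD addrACA.
by rewrite leib1 leib2 mulrBl mulrBr opprD addrACA.
Qed.

Lemma diffop_sum (I : finType) (P : pred I) (D : I -> pathalg -> A) :
  (forall i, P i -> is_diffop pi (D i)) ->
  is_diffop pi (fun x => \sum_(i | P i) D i x).
Proof.
move=> diffD; split=> [a x y | x y].
  by rewrite scaler_sumr -big_split; apply: eq_bigr => i /diffD[].
by rewrite mulr_suml mulr_sumr -big_split; apply: eq_bigr => i /diffD[].
Qed.

Hypotheses (pi_lin : klinear pi) (pi_mul : forall x y, pi (pmul x y) = pi x * pi y).

Lemma diffop_Dm m : is_diffop pi (Dm pi m).
Proof.
split=> [a x y | x y]; rewrite /Dm.
  by rewrite pi_lin mulrDr mulrDl -scalerAr -scalerAl scalerBr opprD addrACA.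
by rewrite pi_mul mulrBl mulrBr !mulrA addrA subrK.
Qed.

Lemma Dm_pi (x y : pathalg) : Dm pi (pi x) y = pi (pmul x y) - pi (pmul y x).
Proof. rewrite /Dm -(pi_mul x y) -(pi_mul y x); reflexivity. Qed.

Lemma Dm_pel (q p : qpath) :
  Dm pi (pi (pel k q)) (pel k p) = pi (pel_opt k (pcat q p)) - pi (pel_opt k (pcat p q)).
Proof. by rewrite Dm_pi; congr (pi _ - pi _); apply: pmul_pel. Qed.

Lemma Dm_pel_vpath_cycle (q : qpath) v : tP q = hP q ->
  Dm pi (pi (pel k q)) (pel k (vpath t h v)) = 0.
Proof. by move=> cycle_q; rewrite Dm_pel pcat_vpath_cycle // subrr. Qed.

Lemma Dm_pel_apath (q : qpath) e :
  Dm pi (pi (pel k q)) (pel k (apath t h e)) =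
  (if t e == hP q then pi (pel_opt k (pcat q (apath t h e))) else 0) -
  (if h e == tP q then pi (pel_opt k (pcat (apath t h e) q)) else 0).
Proof.
rewrite Dm_pel; congr (_ - _); case: eqP => // [/eqP ne_e]; rewrite pcat_None ?klinear0 //.
  by rewrite eq_sym.
Qed.

Lemma diffop_eq0 D : is_diffop pi D ->
  (forall v, D (pel k (vpath t h v)) = 0) -> (forall e, D (pel k (apath t h e)) = 0) ->
  forall x, D x = 0.
Proof.
move=> [D_lin D_leib] Dv De x.
have Dp : forall p, D (pel k p) = 0.
  apply: (@pel_ind (fun y => D y = 0)) => // y z Dy Dz.
  by rewrite D_leib Dy Dz mul0r mulr0 addr0.
rewrite (monalgE x); apply: (big_ind (fun y => D y = 0)).
- exact: klinear0.
- by move=> y z Dy Dz; rewrite klinearD // Dy Dz addr0.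
- by move=> p _; rewrite malgUZ klinearZ // Dp scaler0.
Qed.

Lemma diffop_eq D1 D2 : is_diffop pi D1 -> is_diffop pi D2 ->
  (forall v, D1 (pel k (vpath t h v)) = D2 (pel k (vpath t h v))) ->
  (forall e, D1 (pel k (apath t h e)) = D2 (pel k (apath t h e))) ->
  forall x, D1 x = D2 x.
Proof.
move=> diff1 diff2 eqv eqe x; apply/eqP; rewrite -subr_eq0; apply/eqP.
apply: (@diffop_eq0 (fun y => D1 y - D2 y)) (diffop_sub diff1 diff2) _ _ x.
  by move=> v; rewrite eqv subrr.
by move=> e; rewrite eqe subrr.
Qed.

Section SumDrs.
Variables (P : pred E) (s : E -> pathalg) (D : E -> pathalg -> A).
Hypothesis D_Drs : forall r, P r -> is_Drs pi r (s r) (D r).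

Lemma sum_Drs_diffop : is_diffop pi (fun x => \sum_(r | P r) D r x).
Proof. by apply: diffop_sum => r /D_Drs[]. Qed.

Lemma sum_Drs_vpath v : \sum_(r | P r) D r (pel k (vpath t h v)) = 0.
Proof. by apply: big1 => r /D_Drs[_ _ _ ->]. Qed.

Lemma sum_Drs_apath e :
  \sum_(r | P r) D r (pel k (apath t h e)) = if P e then pi (s e) else 0.
Proof.
have others r : P r -> r != e -> D r (pel k (apath t h e)) = 0.
  move=> Pr ner; case: (D_Drs Pr) => _ _ Dother _; apply: Dother.
  by rewrite eq_sym.
case: ifP => Pe.
  rewrite (bigD1 e) //= big1 ?addr0 => [|r /andP[Pr ner]]; last exact: others.
  by case: (D_Drs Pe).
apply: big1 => r Pr; apply: (others _ Pr).
by apply: contraFneq _ Pe => <-.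
Qed.

End SumDrs.

End PathAlgebra.

Theorem proposition3p1 (k : fieldType) (V E : finType) (t h : E -> V)
  (Hconn : quiver_connected t h)
  (I : pathalg t h k -> Prop)
  (HI : is_ideal I)
  (HIR2 : forall x, I x -> arrow_ideal2 x)
  (A : algType k) (pi : pathalg t h k -> A)
  (Hpi : is_quotient I pi)
  (v0 : V) (q : qpath t h) (Hqt : tP q = v0) (Hqh : hP q = v0)
  (Dt : E -> pathalg t h k -> A)
  (HDt : forall p : E, t p = v0 ->
           is_Drs pi p (pel_opt k (pcat q (apath t h p))) (Dt p))
  (Dh : E -> pathalg t h k -> A)
  (HDh : forall r : E, h r = v0 ->
           is_Drs pi r (pel_opt k (pcat (apath t h r) q)) (Dh r)) :
  forall x : pathalg t h k,
    Dm pi (pi (pel k q)) x =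
    \sum_(p : E | t p == v0) Dt p x - \sum_(r : E | h r == v0) Dh r x.
Proof.
case: Hpi => pi_lin pi_mul _ _ _.
have HDt' p : t p == v0 -> _ := fun tp => HDt p (eqP tp).
have HDh' r : h r == v0 -> _ := fun hr => HDh r (eqP hr).
apply: diffop_eq => [||v|e].
- exact: diffop_Dm.
- exact: diffop_sub (sum_Drs_diffop HDt') (sum_Drs_diffop HDh').
- rewrite (Dm_pel_vpath_cycle pi_mul); last by rewrite Hqt Hqh.
  by rewrite (sum_Drs_vpath HDt') (sum_Drs_vpath HDh') subrr.
- by rewrite (Dm_pel_apath pi_lin pi_mul) (sum_Drs_apath HDt') (sum_Drs_apath HDh') Hqt Hqh.
Qed.
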